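(* Let $\mathbf{A}\in\mathbb{R}^{n_x\times n_x}$, $\mathbf{B}\in\mathbb{R}^{n_x\times n_u}$, $\mathbf{c}\in\mathbb{R}^{n_x}$, and consider the closed-loop discrete-time system $\mathbf{x}_{t+1}=\mathbf{A}\mathbf{x}_t+\mathbf{B}\pi(\mathbf{x}_t)+\mathbf{c}$, where $\pi:\mathbb{R}^{n_x}\to\mathbb{R}^{n_u}$ is an $m$-layer feedforward neural network control policy with $\pi(\mathbf{x})\in\mathcal{U}$ for all $\mathbf{x}$. Let $\mathcal{U}\subseteq\mathbb{R}^{n_u}$ and $\mathcal{X}\subseteq\mathbb{R}^{n_x}$ be convex sets and let $\mathcal{X}_T\subseteq\mathbb{R}^{n_x}$ be a convex target set. Fix a horizon $\tau\geq 1$, let $\mathcal{T}=\{-\tau,\dots,-1\}$, and let $\bar{\mathcal{P}}_t$ ($t\in\mathcal{T}$) be the sets produced by the construction described in the context (with $\bar{\mathcal{P}}_0=\mathcal{X}_T$). Then for every $t\in\mathcal{T}$, $$\mathcal{P}_t(\mathcal{X}_T)\subseteq\bar{\mathcal{P}}_t(\mathcal{X}_T)=\{\mathbf{x}\mid \underline{\mathbf{x}}_t\leq\mathbf{x}\leq\bar{\mathbf{x}}_t\}.$$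
   Context: States are constrained to the operating region $\mathcal{X}$. True backprojection (BP) sets: $\mathcal{P}_0(\mathcal{X}_T)=\mathcal{X}_T$ and, for $t\in\mathcal{T}$, $\mathcal{P}_t(\mathcal{X}_T)=\{\mathbf{x}\in\mathcal{X}\mid \mathbf{A}\mathbf{x}+\mathbf{B}\pi(\mathbf{x})+\mathbf{c}\in\mathcal{P}_{t+1}(\mathcal{X}_T)\}$, i.e. the states from which the closed-loop system (staying in $\mathcal{X}$) reaches $\mathcal{X}_T$ at time $0$. $\mathbf{e}_k$ denotes the $k$-th standard basis vector, inequalities between vectors are componentwise, and an infeasible optimization problem yields the empty set. Construction, recursively for $t=-1,-2,\dots,-\tau$, with $\bar{\mathcal{P}}_0=\mathcal{X}_T$: (1) Backreachable over-approximation: for each $k\in\{1,\dots,n_x\}$ let $\underline{\underline{\mathbf{x}}}_{t;k}$ (resp. $\bar{\bar{\mathbf{x}}}_{t;k}$) be the minimum (resp. maximum) of $\mathbf{e}_k^\top\mathbf{x}_t$ over all $(\mathbf{x}_t,\mathbf{u}_t)$ satisfying $\mathbf{A}\mathbf{x}_t+\mathbf{B}\mathbf{u}_t+\mathbf{c}\in\bar{\mathcal{P}}_{t+1}$, $\mathbf{u}_t\in\mathcal{U}$, $\mathbf{x}_t\in\mathcal{X}$; set $\bar{\mathcal{R}}_t=\{\mathbf{x}\mid\underline{\underline{\mathbf{x}}}_t\le\mathbf{x}\le\bar{\bar{\mathbf{x}}}_t\}$. (2) Relaxation of the network: affine functions $\pi^L_t(\mathbf{x})=\mathbf{\Phi}_t\mathbf{x}+\boldsymbol{\beta}_t$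 and $\pi^U_t(\mathbf{x})=\mathbf{\Psi}_t\mathbf{x}+\boldsymbol{\alpha}_t$ (e.g. obtained by the CROWN relaxation) satisfying $\pi^L_t(\mathbf{x})\le\pi(\mathbf{x})\le\pi^U_t(\mathbf{x})$ for all $\mathbf{x}\in\bar{\mathcal{R}}_t$. (3) BP over-approximation: for each $k$, let $\underline{\mathbf{x}}_{t;k}$ (resp. $\bar{\mathbf{x}}_{t;k}$) be the minimum (resp. maximum) of $\mathbf{e}_k^\top\mathbf{x}_t$ over all variables $\mathbf{x}_t,\dots,\mathbf{x}_{0}$, $\mathbf{u}_t,\dots,\mathbf{u}_{-1}$ satisfying, for every $i\in\{t,\dots,-1\}$: $\mathbf{x}_i\in\bar{\mathcal{R}}_i$, $\pi^L_i(\mathbf{x}_i)\le\mathbf{u}_i\le\pi^U_i(\mathbf{x}_i)$, $\mathbf{x}_{i+1}=\mathbf{A}\mathbf{x}_i+\mathbf{B}\mathbf{u}_i+\mathbf{c}$, and $\mathbf{x}_{i+1}\in\bar{\mathcal{P}}_{i+1}$; set $\bar{\mathcal{P}}_t=\{\mathbf{x}\mid\underline{\mathbf{x}}_t\le\mathbf{x}\le\bar{\mathbf{x}}_t\}$. *)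

From HB Require Import structures.
From mathcomp Require Import all_boot all_order all_algebra.
From mathcomp Require Import boolp classical_sets reals constructive_ereal ereal.
Set Implicit Arguments. Unset Strict Implicit. Unset Printing Implicit Defensive.
Import Order.TTheory GRing.Theory Num.Theory.
Local Open Scope classical_set_scope.
Local Open Scope ring_scope.

Section Defs.
Variable R : realType.

Definition lecv (n : nat) (u v : 'cV[R]_n) : Prop := forall i, u i 0 <= v i 0.

Definition convex_cv (n : nat) (S : set 'cV[R]_n) : Prop :=
  forall x y, S x -> S y -> forall l : R, 0 <= l -> l <= 1 ->
    S (l *: x + (1 - l) *: y).

(* m-layer feedforward neural network 'cV_a -> 'cV_b : (m-1) hidden layers,
   each an affine map followed by an elementwise activation, then an affine
   output layer. *)
Inductive ffnn : forall (a b : nat), nat -> ('cV[R]_a -> 'cV[R]_b) -> Prop :=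
| ffnn_out a b (W : 'M[R]_(b, a)) (bias : 'cV[R]_b) :
    ffnn 1 (fun x => W *m x + bias)
| ffnn_hidden a h b m (sigma : R -> R) (W : 'M[R]_(h, a)) (bias : 'cV[R]_h)
    (f : 'cV[R]_h -> 'cV[R]_b) :
    ffnn m f -> ffnn m.+1 (fun x => f (map_mx sigma (W *m x + bias))).

Definition ebox (n : nat) (lo hi : 'I_n -> \bar R) : set 'cV[R]_n :=
  [set x | forall i, (lo i <= (x i 0)%:E)%E /\ ((x i 0)%:E <= hi i)%E].

(* the box whose k-th bounds are the min / max of e_k^T x over the feasible set S
   (inf / sup in the extended reals; an infeasible S gives the empty box) *)
Definition hull_box (n : nat) (S : set 'cV[R]_n) : set 'cV[R]_n :=
  ebox (fun i => ereal_inf [set (x i 0)%:E | x in S])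
       (fun i => ereal_sup [set (x i 0)%:E | x in S]).

(* True backprojection sets; index k stands for time t = -k. *)
Fixpoint true_bp (nx nu : nat) (A : 'M[R]_nx) (B : 'M[R]_(nx, nu)) (c : 'cV[R]_nx)
  (pi : 'cV[R]_nx -> 'cV[R]_nu) (X XT : set 'cV[R]_nx) (k : nat) : set 'cV[R]_nx :=
  match k with
  | 0 => XT
  | k'.+1 => [set x | X x /\ true_bp A B c pi X XT k' (A *m x + B *m pi x + c)]
  end.

(* Step (1): feasible states for the backreachable over-approximation at t = -k,
   given Pnext = \bar P_{t+1}. *)
Definition backreach_feas (nx nu : nat) (A : 'M[R]_nx) (B : 'M[R]_(nx, nu))
  (c : 'cV[R]_nx) (U : set 'cV[R]_nu) (X Pnext : set 'cV[R]_nx) : set 'cV[R]_nx :=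
  [set x | exists u, Pnext (A *m x + B *m u + c) /\ U u /\ X x].

(* Step (3): the values of x_t (t = -k) over all feasible x_t..x_0, u_t..u_{-1};
   xs j stands for x_{-j}, us j for u_{-j}. *)
Definition bp_feas (nx nu : nat) (A : 'M[R]_nx) (B : 'M[R]_(nx, nu)) (c : 'cV[R]_nx)
  (Rbar Pbar : nat -> set 'cV[R]_nx)
  (Phi Psi : nat -> 'M[R]_(nu, nx)) (beta alpha : nat -> 'cV[R]_nu) (k : nat)
  : set 'cV[R]_nx :=
  [set x | exists (xs : nat -> 'cV[R]_nx) (us : nat -> 'cV[R]_nu),
     xs k = x /\
     forall j, (1 <= j <= k)%N ->
       [/\ Rbar j (xs j),
           lecv (Phi j *m xs j + beta j) (us j),
           lecv (us j) (Psi j *m xs j + alpha j),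
           xs j.-1 = A *m xs j + B *m us j + c &
           Pbar j.-1 (xs j.-1)]].

End Defs.

From HB Require Import structures.
From mathcomp Require Import all_boot all_order all_algebra.
From mathcomp Require Import boolp classical_sets reals constructive_ereal ereal.
Set Implicit Arguments. Unset Strict Implicit. Unset Printing Implicit Defensive.
Import Order.TTheory GRing.Theory Num.Theory.
Local Open Scope classical_set_scope.
Local Open Scope ring_scope.

(* A state in the true backprojection set at time -k starts a closed-loop
   trajectory x_{-k}, ..., x_0 in X ending in X_T, driven by the inputs pi x_{-j}.
   By strong induction on k, x_{-j} lies in R_{-j}, since (x_{-j}, pi x_{-j}) is
   feasible for step (1); hence pi x_{-j} lies between the linear relaxations and
   the whole trajectory is feasible for step (3).  Each over-approximation is the
   bounding box of its feasible set, so it contains the trajectory. *)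

Lemma sub_hull_box (R : realType) n (S : set 'cV[R]_n) : S `<=` hull_box S.
Proof.
move=> x Sx i; split.
- by apply: ereal_inf_lbound; exists x.
- by apply: ereal_sup_ubound; exists x.
Qed.

Definition closed_loop (R : realType) nx nu (A : 'M[R]_nx) (B : 'M[R]_(nx, nu))
  (c : 'cV[R]_nx) (pi : 'cV[R]_nx -> 'cV[R]_nu) (x : 'cV[R]_nx) : 'cV[R]_nx :=
  A *m x + B *m pi x + c.

Section TrueBackprojection.
Variables (R : realType) (nx nu : nat).
Variables (A : 'M[R]_nx) (B : 'M[R]_(nx, nu)) (c : 'cV[R]_nx).
Variables (pi : 'cV[R]_nx -> 'cV[R]_nu) (U : set 'cV[R]_nu) (X XT : set 'cV[R]_nx).

Local Notation P := (true_bp A B c pi X XT).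
Local Notation step := (closed_loop A B c pi).

Lemma true_bp_iter n j x : P (j + n) x -> P j (iter n step x).
Proof.
elim: n j x => [|n IHn] j x; first by rewrite addn0.
by rewrite addnS -addSn => /IHn [].
Qed.

Lemma true_bpS_sub_backreach_feas k (Q : set 'cV[R]_nx) :
  (forall x, U (pi x)) -> P k `<=` Q -> P k.+1 `<=` backreach_feas A B c U X Q.
Proof. by move=> piU PQ x [Xx Pstep]; exists (pi x); split; [apply: PQ | ]. Qed.

End TrueBackprojection.

Section Soundness.
Variables (R : realType) (nx nu tau : nat).
Variables (A : 'M[R]_nx) (B : 'M[R]_(nx, nu)) (c : 'cV[R]_nx).
Variables (pi : 'cV[R]_nx -> 'cV[R]_nu) (U : set 'cV[R]_nu) (X XT : set 'cV[R]_nx).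
Variables (Rbar Pbar : nat -> set 'cV[R]_nx).
Variables (Phi Psi : nat -> 'M[R]_(nu, nx)) (beta alpha : nat -> 'cV[R]_nu).

Hypothesis piU : forall x, U (pi x).
Hypothesis Pbar0 : Pbar 0%N = XT.
Hypothesis RbarE : forall k, (1 <= k <= tau)%N ->
  Rbar k = hull_box (backreach_feas A B c U X (Pbar k.-1)).
Hypothesis pi_relax : forall k, (1 <= k <= tau)%N -> forall x, Rbar k x ->
  lecv (Phi k *m x + beta k) (pi x) /\ lecv (pi x) (Psi k *m x + alpha k).
Hypothesis PbarE : forall k, (1 <= k <= tau)%N ->
  Pbar k = hull_box (bp_feas A B c Rbar Pbar Phi Psi beta alpha k).

Local Notation P := (true_bp A B c pi X XT).
Local Notation step := (closed_loop A B c pi).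

Lemma true_bp_sub_Rbar k : (1 <= k <= tau)%N ->
  P k.-1 `<=` Pbar k.-1 -> P k `<=` Rbar k.
Proof.
case: k => // k kt sub; rewrite RbarE //.
by move=> x /(true_bpS_sub_backreach_feas piU sub) /sub_hull_box.
Qed.

Lemma true_bp_sub_bp_feas k : (k <= tau)%N ->
  (forall j, (j < k)%N -> P j `<=` Pbar j) ->
  P k `<=` bp_feas A B c Rbar Pbar Phi Psi beta alpha k.
Proof.
move=> kt sub x Px.
pose xs j := iter (k - j) step x.
have xs_bp j : (j <= k)%N -> P j (xs j).
  by move=> jk; apply: true_bp_iter; rewrite subnKC.
exists xs, (pi \o xs); split; first by rewrite /xs subnn.
move=> j /andP[j1 jk].
have jt : (1 <= j <= tau)%N by rewrite j1 (leq_trans jk kt).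
have j'k : (j.-1 < k)%N by rewrite prednK.
have Pbar_pred : Pbar j.-1 (xs j.-1) by apply/sub/xs_bp/ltnW.
have Rbar_j : Rbar j (xs j) by apply: (true_bp_sub_Rbar jt (sub _ j'k)); apply: xs_bp.
have xs_step : xs j.-1 = step (xs j).
  by rewrite /xs -(prednK j1) -subnSK ?prednK.
have [lo hi] := pi_relax jt Rbar_j.
by split.
Qed.

Lemma true_bp_sub_Pbar k : (k <= tau)%N -> P k `<=` Pbar k.
Proof.
elim/ltn_ind: k => -[|k] IH kt; first by rewrite Pbar0.
have sub j : (j < k.+1)%N -> P j `<=` Pbar j.
  by move=> jk; apply: IH => //; exact/ltnW/(leq_trans jk).
by rewrite PbarE ?kt // => x /(true_bp_sub_bp_feas kt sub) /sub_hull_box.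
Qed.

End Soundness.

Theorem lemma4p1 (R : realType) (nx nu m tau : nat)
  (A : 'M[R]_nx) (B : 'M[R]_(nx, nu)) (c : 'cV[R]_nx)
  (pi : 'cV[R]_nx -> 'cV[R]_nu)
  (U : set 'cV[R]_nu) (X XT : set 'cV[R]_nx)
  (Hpi : ffnn m pi) (HpiU : forall x, U (pi x))
  (HU : convex_cv U) (HX : convex_cv X) (HXT : convex_cv XT)
  (Htau : (1 <= tau)%N)
  (Rbar Pbar : nat -> set 'cV[R]_nx)
  (Phi Psi : nat -> 'M[R]_(nu, nx)) (beta alpha : nat -> 'cV[R]_nu)
  (HP0 : Pbar 0%N = XT)
  (HR : forall k, (1 <= k <= tau)%N ->
        Rbar k = hull_box (backreach_feas A B c U X (Pbar k.-1)))
  (Hrelax : forall k, (1 <= k <= tau)%N -> forall x, Rbar k x ->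
        lecv (Phi k *m x + beta k) (pi x) /\ lecv (pi x) (Psi k *m x + alpha k))
  (HP : forall k, (1 <= k <= tau)%N ->
        Pbar k = hull_box (bp_feas A B c Rbar Pbar Phi Psi beta alpha k)) :
  forall k, (1 <= k <= tau)%N -> true_bp A B c pi X XT k `<=` Pbar k.
Proof.
move=> k /andP[_ kt].
exact: (true_bp_sub_Pbar HpiU HP0 HR Hrelax HP kt).
Qed.
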